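(* Assume every $\nabla f_j$ and $\nabla g_i$ is Lipschitz continuous on $\mathbb{R}^n$ with Lipschitz constant $L$. Consider iteration $k$ of the SQP algorithm, and suppose the solution $(t^k,d^k)$ of $QP(x^k)$ satisfies $d^k\neq 0$ and $\sigma_{k+1}$ has been computed by Step 3. Then there exists $\bar\alpha>0$ such that for every $\alpha\in(0,\bar\alpha]$, $\Psi_{j,\sigma_{k+1}}(x^k+\alpha d^k)-\Psi_{j,\sigma_{k+1}}(x^k)\le \alpha\beta\,\theta_{j,\sigma_{k+1}}(x^k;d^k)$ for all $j=1,\dots,m$.
   Context: $f_j,g_i:\mathbb{R}^n\to\mathbb{R}$ ($j=1,\dots,m$, $i=1,\dots,p$) are continuously differentiable. $\Phi(x)=\max\{0,g_1(x),\dots,g_p(x)\}$; $I(x)=\{i: g_i(x)=\Phi(x)\}$; $\Phi^*(x;d)=\max\{\max_{i\in I(x)}(g_i(x)+\nabla g_i(x)^Td),0\}-\Phi(x)$; $\Psi_{j,\sigma}(x)=f_j(x)+\sigma\Phi(x)$; $\theta_{j,\sigma}(x;d)=\nabla f_j(x)^Td+\sigma\Phi^*(x;d)$. $QP(x)$: minimize $t+\frac12 d^Td$ over $(t,d)\in\mathbb{R}\times\mathbb{R}^n$ subject to $\nabla f_j(x)^Td\le t$ for all $j$ and $g_i(x)+\nabla g_i(x)^Td\le t$ for all $i$ (unique solution). SQP algorithm: choose $x^0\in\mathbb{R}^n$, $r\in(0,1)$, $\beta\in(0,1)$, $\sigma_0>0$; set $k=0$. Step 2: let $(t^k,d^k)$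 solve $QP(x^k)$; stop if $d^k=0$. Step 3: if $\Phi(x^k)=0$ or $\theta_{j,\sigma_k}(x^k;d^k)\le-\frac12 (d^k)^Td^k$ for all $j$, set $\sigma_{k+1}=\sigma_k$; otherwise set $\sigma_{k+1}=\max\{2\sigma_k,\ (\nabla f_j(x^k)^Td^k+\frac12(d^k)^Td^k)/(-\Phi^*(x^k;d^k)),\ j=1,\dots,m\}$. Step 4: let $\alpha_k$ be the first number in $\{1,r,r^2,\dots\}$ with $\Psi_{j,\sigma_{k+1}}(x^k+\alpha_kd^k)-\Psi_{j,\sigma_{k+1}}(x^k)\le\alpha_k\beta\,\theta_{j,\sigma_{k+1}}(x^k;d^k)$ for all $j$. Step 5: $x^{k+1}=x^k+\alpha_kd^k$, $k:=k+1$, go to Step 2. *)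

(* real analysis on R^n, vectors represented as nat -> R,
   only the coordinates 0..n-1 being relevant. *)
From Stdlib Require Import Reals Lra List.
Open Scope R_scope.

Definition Vec := nat -> R.

Fixpoint dot (n : nat) (u v : Vec) : R :=
  match n with
  | O => 0
  | S k => dot k u v + u k * v k
  end.

Definition vnorm (n : nat) (u : Vec) : R := sqrt (dot n u u).

Definition vadd (u v : Vec) : Vec := fun i => u i + v i.
Definition vsub (u v : Vec) : Vec := fun i => u i - v i.
Definition vscal (a : R) (u : Vec) : Vec := fun i => a * u i.

Definition HasGradient (n : nat) (F : Vec -> R) (G : Vec -> Vec) : Prop :=
  forall x : Vec, forall eps : R, 0 < eps ->
    exists delta : R, 0 < delta /\
      forall h : Vec, vnorm n h < delta ->
        Rabs (F (vadd x h) - F x - dot n (G x) h) <= eps * vnorm n h.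

Definition VContinuous (n : nat) (G : Vec -> Vec) : Prop :=
  forall x : Vec, forall eps : R, 0 < eps ->
    exists delta : R, 0 < delta /\
      forall y : Vec, vnorm n (vsub y x) < delta ->
        vnorm n (vsub (G y) (G x)) < eps.

Definition LipschitzWith (n : nat) (L : R) (G : Vec -> Vec) : Prop :=
  forall x y : Vec, vnorm n (vsub (G x) (G y)) <= L * vnorm n (vsub x y).

Fixpoint maxfold (p : nat) (P : nat -> Prop) (Pdec : forall i, {P i} + {~ P i})
    (a : nat -> R) (a0 : R) : R :=
  match p with
  | O => a0
  | S k => let r := maxfold k P Pdec a a0 in
           if Pdec k then Rmax r (a k) else r
  end.

Definition always_dec (i : nat) : {True} + {~ True} := left I.

(* Phi(x) = max{0, g_1(x), ..., g_p(x)}  (indices 0..p-1) *)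
Definition Phi (p : nat) (g : nat -> Vec -> R) (x : Vec) : R :=
  maxfold p (fun _ => True) always_dec (fun i => g i x) 0.

Definition activeI (p : nat) (g : nat -> Vec -> R) (x : Vec) (i : nat) : Prop :=
  g i x = Phi p g x.

Definition activeI_dec (p : nat) (g : nat -> Vec -> R) (x : Vec) (i : nat) :
  {activeI p g x i} + {~ activeI p g x i} := Req_dec_T _ _.

(* Phi*(x;d) = max{ max_{i in I(x)} (g_i(x) + grad g_i(x)^T d), 0 } - Phi(x).
   The inner max over a possibly empty I(x) is absorbed by the outer max with 0. *)
Definition PhiStar (n p : nat) (g : nat -> Vec -> R) (gg : nat -> Vec -> Vec)
    (x d : Vec) : R :=
  maxfold p (activeI p g x) (activeI_dec p g x)
    (fun i => g i x + dot n (gg i x) d) 0 - Phi p g x.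

Definition Psi (p : nat) (f g : nat -> Vec -> R) (sigma : R) (j : nat) (x : Vec) : R :=
  f j x + sigma * Phi p g x.

Definition theta (n p : nat) (g : nat -> Vec -> R) (gf gg : nat -> Vec -> Vec)
    (sigma : R) (j : nat) (x d : Vec) : R :=
  dot n (gf j x) d + sigma * PhiStar n p g gg x d.

Definition QPfeasible (n m p : nat) (g : nat -> Vec -> R) (gf gg : nat -> Vec -> Vec)
    (x : Vec) (t : R) (d : Vec) : Prop :=
  (forall j, (j < m)%nat -> dot n (gf j x) d <= t) /\
  (forall i, (i < p)%nat -> g i x + dot n (gg i x) d <= t).

Definition QPsolution (n m p : nat) (g : nat -> Vec -> R) (gf gg : nat -> Vec -> Vec)
    (x : Vec) (t : R) (d : Vec) : Prop :=
  QPfeasible n m p g gf gg x t d /\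
  forall (t' : R) (d' : Vec), QPfeasible n m p g gf gg x t' d' ->
    t + / 2 * dot n d d <= t' + / 2 * dot n d' d'.

Definition Step3 (n m p : nat) (g : nat -> Vec -> R) (gf gg : nat -> Vec -> Vec)
    (x d : Vec) (sigma sigma' : R) : Prop :=
  let cond := Phi p g x = 0 \/
              (forall j, (j < m)%nat -> theta n p g gf gg sigma j x d <= - (/ 2 * dot n d d)) in
  (cond -> sigma' = sigma) /\
  (~ cond -> sigma' =
     maxfold m (fun _ => True) always_dec
       (fun j => (dot n (gf j x) d + / 2 * dot n d d) / (- PhiStar n p g gg x d))
       (2 * sigma)).

(* To first order along d, f_j moves by alpha grad f_j(x)^T d, and Phi moves by at most
   alpha Phi*(x;d): the constraints active at x follow their linearisations, the inactive ones stay
   below Phi(x) for small steps.  Hence for small alpha the change of Psi_j is alpha theta_j up to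
   alpha times an arbitrarily small multiple of |d|.  Optimality of (t,d) against the feasible point
   (Phi(x), 0) of QP(x) together with the choice of sigma in Step 3 gives theta_j <= -|d|^2/2 < 0,
   so this error is absorbed by the slack (1 - beta) theta_j. *)
From Stdlib Require Import Reals Lra Lia Classical.
Open Scope R_scope.

Lemma dot_scal_r n u v a : dot n u (vscal a v) = a * dot n u v.
Proof. induction n as [|n IH]; simpl; [ring|]. rewrite IH. unfold vscal. ring. Qed.

Lemma dot_scal_l n u v a : dot n (vscal a u) v = a * dot n u v.
Proof. induction n as [|n IH]; simpl; [ring|]. rewrite IH. unfold vscal. ring. Qed.

Lemma dot_0r n u : dot n u (fun _ => 0) = 0.
Proof. induction n as [|n IH]; simpl; [ring|]. rewrite IH. ring. Qed.

Lemma dot_self_ge0 n u : 0 <= dot n u u.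
Proof. induction n; simpl; nra. Qed.

Lemma dot_self_gt0 n u : (exists i, (i < n)%nat /\ u i <> 0) -> 0 < dot n u u.
Proof.
  induction n as [|n IH]; intros [i [Hi Hu]]; [lia|]. simpl.
  pose proof (dot_self_ge0 n u).
  destruct (Nat.eq_dec i n) as [->|Hne].
  - assert (0 < u n * u n) by nra. lra.
  - assert (0 < dot n u u) by (apply IH; exists i; split; [lia|auto]). nra.
Qed.

Lemma vnorm_gt0 n u : 0 < dot n u u -> 0 < vnorm n u.
Proof. apply sqrt_lt_R0. Qed.

Lemma vnorm_scal n u a : 0 <= a -> vnorm n (vscal a u) = a * vnorm n u.
Proof.
  intros Ha. unfold vnorm. rewrite dot_scal_l, dot_scal_r, <- Rmult_assoc.
  rewrite sqrt_mult_alt by nra. rewrite sqrt_square by lra. reflexivity.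
Qed.

Section Maxfold.
Variables (P : nat -> Prop) (Pdec : forall i, {P i} + {~ P i}) (a : nat -> R) (a0 : R).

Lemma maxfold_ge_init k : a0 <= maxfold k P Pdec a a0.
Proof.
  induction k as [|k IH]; simpl; [lra|]. destruct (Pdec k); [|lra].
  eapply Rle_trans; [apply IH|apply Rmax_l].
Qed.

Lemma maxfold_ge k i : (i < k)%nat -> P i -> a i <= maxfold k P Pdec a a0.
Proof.
  induction k as [|k IH]; intros Hi HP; [lia|]. simpl.
  destruct (Nat.eq_dec i k) as [->|Hne].
  - destruct (Pdec k); [apply Rmax_r|contradiction].
  - assert (a i <= maxfold k P Pdec a a0) by (apply IH; auto; lia).
    destruct (Pdec k); [|lra]. eapply Rle_trans; [eassumption|apply Rmax_l].
Qed.

Lemma maxfold_le k B : a0 <= B -> (forall i, (i < k)%nat -> P i -> a i <= B) ->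
  maxfold k P Pdec a a0 <= B.
Proof.
  intros H0 H. induction k as [|k IH]; simpl; [lra|].
  destruct (Pdec k).
  - apply Rmax_lub; [apply IH; intros; apply H; auto; lia|apply H; auto].
  - apply IH; intros; apply H; auto; lia.
Qed.
End Maxfold.

Definition eventually_0plus (P : R -> Prop) : Prop :=
  exists del, 0 < del /\ forall al, 0 < al <= del -> P al.

Lemma eventually_0plus_mono (P Q : R -> Prop) :
  (forall al, 0 < al -> P al -> Q al) -> eventually_0plus P -> eventually_0plus Q.
Proof.
  intros HPQ [del [Hdel HP]]. exists del. split; [exact Hdel|].
  intros al Hal. apply HPQ; [lra|]. apply HP, Hal.
Qed.

Lemma eventually_0plus_and (P Q : R -> Prop) :
  eventually_0plus P -> eventually_0plus Q -> eventually_0plus (fun al => P al /\ Q al).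
Proof.
  intros [d1 [Hd1 HP]] [d2 [Hd2 HQ]]. exists (Rmin d1 d2).
  split; [apply Rmin_glb_lt; assumption|].
  intros al Hal. pose proof (Rmin_l d1 d2). pose proof (Rmin_r d1 d2).
  split; [apply HP|apply HQ]; lra.
Qed.

Lemma eventually_0plus_forall_lt (k : nat) (P : nat -> R -> Prop) :
  (forall i, (i < k)%nat -> eventually_0plus (P i)) ->
  eventually_0plus (fun al => forall i, (i < k)%nat -> P i al).
Proof.
  induction k as [|k IH]; intros H.
  - exists 1. split; [lra|]. intros; lia.
  - apply (eventually_0plus_mono (fun al => (forall i, (i < k)%nat -> P i al) /\ P k al)).
    + intros al _ [Hlt Hk] i Hi.
      destruct (Nat.eq_dec i k) as [->|Hne]; [exact Hk|apply Hlt; lia].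
    + apply eventually_0plus_and; [apply IH; intros; apply H; lia|apply H; lia].
Qed.

Lemma eventually_0plus_le (c : R) : 0 < c -> eventually_0plus (fun al => al <= c).
Proof. intros Hc. exists c. split; [exact Hc|]. intros al Hal; lra. Qed.

Lemma eventually_0plus_mul_le (u gap : R) : 0 < gap -> eventually_0plus (fun al => al * u <= gap).
Proof.
  intros Hgap. exists (gap / (Rabs u + 1)). pose proof (Rabs_pos u) as Hu.
  split; [apply Rdiv_lt_0_compat; lra|].
  intros al [Hal Hle].
  apply Rmult_le_compat_r with (r := Rabs u + 1) in Hle; [|lra].
  replace (gap / (Rabs u + 1) * (Rabs u + 1)) with gap in Hle by (field; lra).
  pose proof (Rle_abs u). nra.
Qed.

Lemma HasGradient_step_le n F G x d eps :
  HasGradient n F G -> 0 < eps -> 0 < vnorm n d ->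
  eventually_0plus (fun al =>
    F (vadd x (vscal al d)) - F x <= al * dot n (G x) d + al * eps * vnorm n d).
Proof.
  intros HG He HN. destruct (HG x eps He) as [del [Hdel Hh]].
  exists (del / (2 * vnorm n d)). split; [apply Rdiv_lt_0_compat; lra|].
  intros al [Hal Hle]. specialize (Hh (vscal al d)).
  rewrite vnorm_scal in Hh by lra. rewrite dot_scal_r in Hh.
  apply Rmult_le_compat_r with (r := vnorm n d) in Hle; [|lra].
  replace (del / (2 * vnorm n d) * vnorm n d) with (del / 2) in Hle by (field; lra).
  pose proof (Hh ltac:(lra)) as Hb.
  pose proof (Rle_abs (F (vadd x (vscal al d)) - F x - al * dot n (G x) d)). nra.
Qed.

Section Constraints.
Variables (n p : nat) (g : nat -> Vec -> R) (gg : nat -> Vec -> Vec).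

Lemma Phi_ge0 x : 0 <= Phi p g x.
Proof. apply maxfold_ge_init. Qed.

Lemma g_le_Phi x i : (i < p)%nat -> g i x <= Phi p g x.
Proof. intros Hi. apply (maxfold_ge (fun _ => True) always_dec (fun i => g i x)); auto. Qed.

Lemma PhiStar_ge_neg_Phi x d : - Phi p g x <= PhiStar n p g gg x d.
Proof.
  unfold PhiStar.
  pose proof (maxfold_ge_init (activeI p g x) (activeI_dec p g x)
                (fun i => g i x + dot n (gg i x) d) 0 p). lra.
Qed.

Lemma active_linearization_le x d i : (i < p)%nat -> activeI p g x i ->
  dot n (gg i x) d <= PhiStar n p g gg x d.
Proof.
  intros Hi Ha. unfold PhiStar.
  pose proof (maxfold_ge (activeI p g x) (activeI_dec p g x)
                (fun i => g i x + dot n (gg i x) d) 0 p i Hi Ha).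
  unfold activeI in Ha. lra.
Qed.

Hypothesis Hg : forall i, (i < p)%nat -> HasGradient n (g i) (gg i).

(* An inactive constraint has a positive gap below Phi(x), which absorbs its first-order
   change for small steps. *)
Lemma constraint_step_le x d eps i : (i < p)%nat -> 0 < eps -> 0 < vnorm n d ->
  eventually_0plus (fun al => g i (vadd x (vscal al d))
    <= Phi p g x + al * PhiStar n p g gg x d + al * eps * vnorm n d).
Proof.
  intros Hi He HN.
  pose proof (HasGradient_step_le n (g i) (gg i) x d eps (Hg i Hi) He HN) as Hstep.
  destruct (Req_dec (g i x) (Phi p g x)) as [Ha|Hna].
  - pose proof (active_linearization_le x d i Hi Ha).
    refine (eventually_0plus_mono _ _ _ Hstep).
    intros al Hal Hle.
    assert (al * dot n (gg i x) d <= al * PhiStar n p g gg x d) by (apply Rmult_le_compat_l; lra).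
    lra.
  - assert (Hgap : 0 < Phi p g x - g i x).
    { destruct (g_le_Phi x i Hi); [lra|contradiction]. }
    pose proof (eventually_0plus_mul_le
                  (dot n (gg i x) d - PhiStar n p g gg x d) _ Hgap) as Hsmall.
    refine (eventually_0plus_mono _ _ _ (eventually_0plus_and _ _ Hstep Hsmall)).
    intros al Hal [Hle Hmul].
    assert (0 <= al * eps * vnorm n d) by (apply Rmult_le_pos; nra).
    nra.
Qed.

Lemma Phi_step_le x d eps : 0 < eps -> 0 < vnorm n d ->
  eventually_0plus (fun al => Phi p g (vadd x (vscal al d))
    <= Phi p g x + al * PhiStar n p g gg x d + al * eps * vnorm n d).
Proof.
  intros He HN.
  pose proof (eventually_0plus_forall_lt p _
                (fun i Hi => constraint_step_le x d eps i Hi He HN)) as Hcons.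
  refine (eventually_0plus_mono _ _ _
            (eventually_0plus_and _ _ (eventually_0plus_le 1 ltac:(lra)) Hcons)).
  intros al Hal [Hle1 Hall]. unfold Phi at 1.
  apply maxfold_le; [|intros i Hi _; exact (Hall i Hi)].
  pose proof (Phi_ge0 x). pose proof (PhiStar_ge_neg_Phi x d).
  assert (0 <= al * eps * vnorm n d) by (apply Rmult_le_pos; nra).
  nra.
Qed.
End Constraints.

Lemma theta_le_of_penalty_ge n p g gf gg sigma j x d :
  PhiStar n p g gg x d < 0 ->
  (dot n (gf j x) d + / 2 * dot n d d) / (- PhiStar n p g gg x d) <= sigma ->
  theta n p g gf gg sigma j x d <= - (/ 2 * dot n d d).
Proof.
  intros Hneg Hsig. unfold theta.
  apply Rmult_le_compat_r with (r := - PhiStar n p g gg x d) in Hsig; [|lra].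
  unfold Rdiv in Hsig. rewrite Rmult_assoc, Rinv_l in Hsig by lra. lra.
Qed.

Section QuadraticSubproblem.
Variables (n m p : nat) (g : nat -> Vec -> R) (gf gg : nat -> Vec -> Vec).
Variables (x : Vec) (t : R) (d : Vec).
Hypothesis HQP : QPsolution n m p g gf gg x t d.

Lemma QPsolution_value_le : t + / 2 * dot n d d <= Phi p g x.
Proof.
  destruct HQP as [_ Hmin].
  assert (Hfeas0 : QPfeasible n m p g gf gg x (Phi p g x) (fun _ => 0)).
  { split; intros i Hi; rewrite dot_0r.
    - pose proof (Phi_ge0 p g x). lra.
    - pose proof (g_le_Phi p g x i Hi). lra. }
  pose proof (Hmin _ _ Hfeas0) as Hle. rewrite dot_0r in Hle. lra.
Qed.

Lemma QPsolution_grad_f_le j : (j < m)%nat -> dot n (gf j x) d <= Phi p g x - / 2 * dot n d d.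
Proof.
  intros Hj. destruct HQP as [[Hfeas _] _].
  pose proof (Hfeas j Hj). pose proof QPsolution_value_le. lra.
Qed.

Lemma QPsolution_PhiStar_le :
  PhiStar n p g gg x d <= Rmax 0 (Phi p g x - / 2 * dot n d d) - Phi p g x.
Proof.
  destruct HQP as [[_ Hfeas] _]. pose proof QPsolution_value_le.
  unfold PhiStar. apply Rplus_le_compat_r, maxfold_le; [apply Rmax_l|].
  intros i Hi _. eapply Rle_trans; [|apply Rmax_r]. pose proof (Hfeas i Hi). lra.
Qed.

Lemma QPsolution_PhiStar_le0 : PhiStar n p g gg x d <= 0.
Proof.
  pose proof QPsolution_PhiStar_le. pose proof (Phi_ge0 p g x).
  pose proof (dot_self_ge0 n d).
  assert (Rmax 0 (Phi p g x - / 2 * dot n d d) <= Phi p g x) by (apply Rmax_lub; lra). lra.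
Qed.

Lemma QPsolution_PhiStar_lt0 : 0 < Phi p g x -> 0 < dot n d d -> PhiStar n p g gg x d < 0.
Proof.
  intros HPhi Hdd. pose proof QPsolution_PhiStar_le.
  assert (Rmax 0 (Phi p g x - / 2 * dot n d d) < Phi p g x) by (apply Rmax_lub_lt; lra). lra.
Qed.

Lemma Step3_theta_le sigma sigma' : 0 < sigma -> 0 < dot n d d ->
  Step3 n m p g gf gg x d sigma sigma' ->
  0 < sigma' /\ forall j, (j < m)%nat -> theta n p g gf gg sigma' j x d <= - (/ 2 * dot n d d).
Proof.
  intros Hsig Hdd [Hkeep Hupdate].
  destruct (classic (Phi p g x = 0 \/ forall j, (j < m)%nat ->
              theta n p g gf gg sigma j x d <= - (/ 2 * dot n d d))) as [Hc|Hc].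
  - rewrite (Hkeep Hc). split; [exact Hsig|].
    destruct Hc as [HPhi|Hth]; [|exact Hth].
    intros j Hj. unfold theta.
    pose proof (QPsolution_grad_f_le j Hj). pose proof QPsolution_PhiStar_le0.
    assert (sigma * PhiStar n p g gg x d <= 0) by nra. lra.
  - rewrite (Hupdate Hc).
    assert (HPhi : 0 < Phi p g x).
    { destruct (Phi_ge0 p g x) as [?|H0]; [assumption|]. exfalso. apply Hc. left. auto. }
    pose proof (QPsolution_PhiStar_lt0 HPhi Hdd) as Hneg.
    split.
    + eapply Rlt_le_trans; [|apply maxfold_ge_init]. lra.
    + intros j Hj. apply theta_le_of_penalty_ge; [exact Hneg|].
      apply (maxfold_ge (fun _ => True) always_dec
               (fun j => (dot n (gf j x) d + / 2 * dot n d d) / (- PhiStar n p g gg x d))); auto.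
Qed.
End QuadraticSubproblem.

(* The error e of the first-order bounds is chosen so that e (1 + sigma) is the slack
   (1 - beta) |d|^2 / 2 left by theta <= -|d|^2/2. *)
Lemma armijo_of_first_order_bounds (al beta sigma a s e D f1 f0 P1 P0 : R) :
  0 < al -> beta < 1 -> 0 <= sigma ->
  f1 - f0 <= al * a + al * e -> P1 <= P0 + al * s + al * e ->
  a + sigma * s <= - (/ 2 * D) -> e * (1 + sigma) = (1 - beta) * D / 2 ->
  f1 + sigma * P1 - (f0 + sigma * P0) <= al * beta * (a + sigma * s).
Proof.
  intros Hal Hbeta Hsig Hf HP Hth He.
  assert (sigma * P1 <= sigma * (P0 + al * s + al * e)) by (apply Rmult_le_compat_l; lra).
  assert (al * (1 - beta) * (a + sigma * s + / 2 * D) <= al * (1 - beta) * 0).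
  { apply Rmult_le_compat_l; [apply Rmult_le_pos|]; lra. }
  nra.
Qed.

Theorem mainTheorem3
  (n m p : nat)
  (f : nat -> Vec -> R) (g : nat -> Vec -> R)
  (gf : nat -> Vec -> Vec) (gg : nat -> Vec -> Vec)
  (Hf : forall j, (j < m)%nat -> HasGradient n (f j) (gf j) /\ VContinuous n (gf j))
  (Hg : forall i, (i < p)%nat -> HasGradient n (g i) (gg i) /\ VContinuous n (gg i))
  (L : R)
  (HLf : forall j, (j < m)%nat -> LipschitzWith n L (gf j))
  (HLg : forall i, (i < p)%nat -> LipschitzWith n L (gg i))
  (beta : R) (Hbeta : 0 < beta < 1)
  (xk : Vec) (sigmak : R) (Hsigmak : 0 < sigmak)
  (tk : R) (dk : Vec)
  (HQP : QPsolution n m p g gf gg xk tk dk)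
  (Hd : exists i, (i < n)%nat /\ dk i <> 0)
  (sigmak1 : R)
  (Hstep3 : Step3 n m p g gf gg xk dk sigmak sigmak1) :
  exists abar : R, 0 < abar /\
    forall alpha : R, 0 < alpha <= abar ->
      forall j, (j < m)%nat ->
        Psi p f g sigmak1 j (vadd xk (vscal alpha dk)) - Psi p f g sigmak1 j xk
          <= alpha * beta * theta n p g gf gg sigmak1 j xk dk.
Proof.
  pose proof (dot_self_gt0 n dk Hd) as Hdd.
  pose proof (vnorm_gt0 n dk Hdd) as HN.
  destruct (Step3_theta_le n m p g gf gg xk tk dk HQP sigmak sigmak1 Hsigmak Hdd Hstep3)
    as [Hsig1 Hdescent].
  set (eps := (1 - beta) * dot n dk dk / (2 * vnorm n dk * (1 + sigmak1))).
  assert (Heps : 0 < eps) by (apply Rdiv_lt_0_compat; nra).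
  assert (Hslack : eps * vnorm n dk * (1 + sigmak1) = (1 - beta) * dot n dk dk / 2)
    by (unfold eps; field; lra).
  assert (Hfstep : eventually_0plus (fun al => forall j, (j < m)%nat ->
            f j (vadd xk (vscal al dk)) - f j xk
              <= al * dot n (gf j xk) dk + al * eps * vnorm n dk)).
  { apply eventually_0plus_forall_lt. intros j Hj.
    apply HasGradient_step_le; [apply Hf, Hj|exact Heps|exact HN]. }
  pose proof (Phi_step_le n p g gg (fun i Hi => proj1 (Hg i Hi)) xk dk eps Heps HN) as HPhistep.
  destruct (eventually_0plus_and _ _ Hfstep HPhistep) as [abar [Habar Hsmall]].
  exists abar. split; [exact Habar|].
  intros al Hal j Hj. destruct (Hsmall al Hal) as [Hfj HPhi].
  pose proof (Hfj j Hj). pose proof (Hdescent j Hj).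
  unfold Psi, theta in *.
  apply (armijo_of_first_order_bounds _ _ _ _ _ (eps * vnorm n dk) (dot n dk dk)); lra.
Qed.
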